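(* Let $l\ge0$, $k,m\in\{-l,\dots,l\}$ be integers, $s\in\mathbb{C}$ with $\mathrm{Re}(s)>1$ and $P\in\mathbb{H}^3$. Then \[H^l_{km}(P,s)=e^{-i(k+m)\pi}\,E^l_{km}(P,s).\]
   Context: $\Gamma=\mathbf{SL}(2,\mathcal{O}_D)$ ($\mathcal{O}_D$ ring of integers of $\mathbb{Q}(\sqrt{-D})$), $\Gamma_\infty$ its upper triangular subgroup, $\Gamma'_\infty=\{\begin{pmatrix}1&w\\0&1\end{pmatrix}:w\in\mathcal{O}_D\}$. $\mathbf{SL}(2,\mathbb{C})$ acts on $\mathbb{H}^3=\{z+\lambda j\}\subset\mathbb{R}^3$ by Möbius transformations, $\mathrm{Im}(z+\lambda j)=\lambda$. $D^l_{km}(R)$ ($R\in\mathbf{SO}(3)$) is the Wigner matrix, defined by $Y^l_m(R^{-1}p)=\sum_kD^l_{km}(R)Y^l_k(p)$, $Y^l_k$ the standard spherical harmonics. $T(g)$ is the $\mathbf{SU}(2)$-factor of the Iwasawa decomposition $g=n[w]a[\mu]K$ ($n[w]=\begin{pmatrix}1&w\\0&1\end{pmatrix}$, $a[\mu]=\mathrm{diag}(\sqrt\mu,1/\sqrt\mu)$); $\Phi:\mathbf{SU}(2)\to\mathbf{SO}(3)$ the spin double cover. For $P=z+\lambda j$: $E^l_{km}(P,s):=\frac{1}{[\Gamma_\infty:\Gamma'_\infty]}\sum_{\sigma\in\Gamma'_\infty\backslash\Gamma}\overline{D^l_{km}(\Phi_{T(\sigma n[z]a[\lambda])^{-1}})}(\mathrm{Im}\,\sigma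 P)^{1+s}$ and $H^l_{km}(P,s):=\frac{1}{[\Gamma_\infty:\Gamma'_\infty]}\sum_{\sigma\in\Gamma'_\infty\backslash\Gamma}\overline{D^l_{km}(R(d\sigma,P)^{-1})}(\mathrm{Im}\,\sigma P)^{1+s}$, where $R(d\sigma,P)\in\mathbf{SO}(3)$ is the linear map $v\mapsto\frac{\lambda}{\mathrm{Im}\,\sigma P}d\sigma_P(v)$ ($d\sigma_P$ the Euclidean differential of $\sigma$ at $P$). *)

From Stdlib Require Import Reals ZArith List ClassicalEpsilon.
Open Scope R_scope.

Definition Cx := (R * R)%type.
Definition RtoC (x : R) : Cx := (x, 0).
Definition C0 : Cx := (0, 0).
Definition C1 : Cx := (1, 0).
Definition Cadd (z w : Cx) : Cx := (fst z + fst w, snd z + snd w).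
Definition Copp (z : Cx) : Cx := (- fst z, - snd z).
Definition Csub (z w : Cx) : Cx := Cadd z (Copp w).
Definition Cmul (z w : Cx) : Cx :=
  (fst z * fst w - snd z * snd w, fst z * snd w + snd z * fst w).
Definition Cscale (r : R) (z : Cx) : Cx := (r * fst z, r * snd z).
Definition Cconj (z : Cx) : Cx := (fst z, - snd z).
Definition Cnorm2 (z : Cx) : R := fst z ^ 2 + snd z ^ 2.
Definition Cnorm (z : Cx) : R := sqrt (Cnorm2 z).
Definition Cinv (z : Cx) : Cx := (fst z / Cnorm2 z, - snd z / Cnorm2 z).
Definition Cdiv (z w : Cx) : Cx := Cmul z (Cinv w).
Definition Cexpi (t : R) : Cx := (cos t, sin t).
Fixpoint Cpow (z : Cx) (n : nat) : Cx :=
  match n with O => C1 | S n => Cmul z (Cpow z n) end.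
(* x^s = exp(s ln x) for real x > 0 and complex s *)
Definition Cpow_pos (x : R) (s : Cx) : Cx :=
  Cscale (exp (fst s * ln x)) (Cexpi (snd s * ln x)).
Fixpoint Csum_n (f : nat -> Cx) (n : nat) : Cx :=
  match n with O => C0 | S n => Cadd (Csum_n f n) (f n) end.
Definition Csum_list (l : list Cx) : Cx := fold_right Cadd C0 l.

(* Unconditional (= absolute, in finite dimension) summability of a family
   indexed by an arbitrary type: the net of finite partial sums converges. *)
Definition HasSum {I : Type} (f : I -> Cx) (S : Cx) : Prop :=
  forall eps, 0 < eps ->
    exists F0 : list I, forall F : list I, NoDup F -> incl F0 F ->
      Cnorm (Csub (Csum_list (map f F)) S) < eps.

Definition squarefree (D : Z) : Prop :=
  forall p : Z, (p * p | D)%Z -> p = 1%Z \/ p = (-1)%Z.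
(* Z-basis {1, omega_D} of O_D *)
Definition omegaD (D : Z) : Cx :=
  if Z.eqb (Z.modulo D 4) 3 then (1 / 2, sqrt (IZR D) / 2)
  else (0, sqrt (IZR D)).
Definition inOD (D : Z) (z : Cx) : Prop :=
  exists a b : Z, z = Cadd (RtoC (IZR a)) (Cscale (IZR b) (omegaD D)).

Record M2 := mkM2 { ma : Cx; mb : Cx; mc : Cx; md : Cx }.
Definition M2id : M2 := mkM2 C1 C0 C0 C1.
Definition M2mul (g h : M2) : M2 :=
  mkM2 (Cadd (Cmul (ma g) (ma h)) (Cmul (mb g) (mc h)))
       (Cadd (Cmul (ma g) (mb h)) (Cmul (mb g) (md h)))
       (Cadd (Cmul (mc g) (ma h)) (Cmul (md g) (mc h)))
       (Cadd (Cmul (mc g) (mb h)) (Cmul (md g) (md h))).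
Definition M2det (g : M2) : Cx := Csub (Cmul (ma g) (md g)) (Cmul (mb g) (mc g)).
Definition M2inv (g : M2) : M2 :=
  let dt := M2det g in
  mkM2 (Cdiv (md g) dt) (Cdiv (Copp (mb g)) dt)
       (Cdiv (Copp (mc g)) dt) (Cdiv (ma g) dt).
Definition M2adj (g : M2) : M2 :=
  mkM2 (Cconj (ma g)) (Cconj (mc g)) (Cconj (mb g)) (Cconj (md g)).
Definition inSL2C (g : M2) : Prop := M2det g = C1.
Definition inSU2 (K : M2) : Prop := inSL2C K /\ M2mul K (M2adj K) = M2id.
Definition inGamma (D : Z) (g : M2) : Prop :=
  inSL2C g /\ inOD D (ma g) /\ inOD D (mb g) /\ inOD D (mc g) /\ inOD D (md g).
Definition nmat (w : Cx) : M2 := mkM2 C1 w C0 C1.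
Definition amat (mu : R) : M2 := mkM2 (RtoC (sqrt mu)) C0 C0 (RtoC (/ sqrt mu)).

Definition IsIwasawaK (g K : M2) : Prop :=
  inSU2 K /\ exists (w : Cx) (mu : R), 0 < mu /\ g = M2mul (nmat w) (M2mul (amat mu) K).
Definition Tk (g : M2) : M2 := epsilon (inhabits M2id) (IsIwasawaK g).

Record H3 := mkH3 { hz : Cx; hl : R }.   (* the point z + lambda j *)
Definition mob (g : M2) (P : H3) : H3 :=
  let z := hz P in let l := hl P in
  let czd := Cadd (Cmul (mc g) z) (md g) in
  let den := Cnorm2 czd + Cnorm2 (mc g) * l ^ 2 in
  mkH3 (Cscale (/ den)
          (Cadd (Cmul (Cadd (Cmul (ma g) z) (mb g)) (Cconj czd))
                (Cscale (l ^ 2) (Cmul (ma g) (Cconj (mc g))))))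
       (l / den).

Inductive i3 := X1 | X2 | X3.
Definition i3_eqb (i j : i3) : bool :=
  match i, j with X1, X1 | X2, X2 | X3, X3 => true | _, _ => false end.
Definition R3 := i3 -> R.
Definition M3 := i3 -> i3 -> R.
Definition M3zero : M3 := fun _ _ => 0.
Definition delta (i j : i3) : R := if i3_eqb i j then 1 else 0.
Definition M3mulv (A : M3) (v : R3) : R3 :=
  fun i => A i X1 * v X1 + A i X2 * v X2 + A i X3 * v X3.
Definition M3mul (A B : M3) : M3 :=
  fun i j => A i X1 * B X1 j + A i X2 * B X2 j + A i X3 * B X3 j.
Definition nx (i : i3) : i3 := match i with X1 => X2 | X2 => X3 | X3 => X1 end.
Definition M3cof (A : M3) (i j : i3) : R :=
  A (nx i) (nx j) * A (nx (nx i)) (nx (nx j))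
  - A (nx i) (nx (nx j)) * A (nx (nx i)) (nx j).
Definition M3det (A : M3) : R :=
  A X1 X1 * M3cof A X1 X1 + A X1 X2 * M3cof A X1 X2 + A X1 X3 * M3cof A X1 X3.
Definition M3inv (A : M3) : M3 := fun i j => M3cof A j i / M3det A.
Definition isSO3 (A : M3) : Prop :=
  (forall i j, M3mul (fun a b => A b a) A i j = delta i j) /\ M3det A = 1.
Definition unitR3 (p : R3) : Prop := p X1 ^ 2 + p X2 ^ 2 + p X3 ^ 2 = 1.

Definition toR3 (P : H3) : R3 :=
  fun i => match i with X1 => fst (hz P) | X2 => snd (hz P) | X3 => hl P end.
Definition ofR3 (v : R3) : H3 := mkH3 (v X1, v X2) (v X3).
Definition mobR3 (g : M2) (v : R3) : R3 := toR3 (mob g (ofR3 v)).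

Definition IsJac (F : R3 -> R3) (v : R3) (L : M3) : Prop :=
  forall i j, derivable_pt_lim (fun t => F (fun q => v q + t * delta j q) i) 0 (L i j).
Definition jac (F : R3 -> R3) (v : R3) : M3 := epsilon (inhabits M3zero) (IsJac F v).

Definition Rdsig (sigma : M2) (P : H3) : M3 :=
  fun i j => (hl P / hl (mob sigma P)) * jac (mobR3 sigma) (toR3 P) i j.

(* R^3 is identified with traceless Hermitian matrices via              *)
(*   Xh(v) = [[-v3, v1 + i v2], [v1 - i v2, v3]],                        *)
Definition Xh (v : R3) : M2 :=
  mkM2 (RtoC (- v X3)) (v X1, v X2) (v X1, - v X2) (RtoC (v X3)).
Definition Xh_inv (Y : M2) : R3 :=
  fun i => match i with X1 => fst (mb Y) | X2 => snd (mb Y) | X3 => fst (md Y) end.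
Definition Phi (K : M2) : M3 :=
  fun i j => Xh_inv (M2mul K (M2mul (Xh (fun q => delta j q)) (M2adj K))) i.

(* Standard spherical harmonics Y^l_m (Condon-Shortley phase) on S^2     *)
(* d^{l+m}/dt^{l+m} (t^2 - 1)^l *)
Definition dLeg (l m : nat) (t : R) : R :=
  sum_f_R0 (fun j =>
    if (l + m <=? 2 * j)%nat then
      INR (fact l) / (INR (fact j) * INR (fact (l - j))) * (-1) ^ (l - j)
      * (INR (fact (2 * j)) / INR (fact (2 * j - (l + m)))) * t ^ (2 * j - (l + m))
    else 0) l.
Definition Nlm (l m : nat) : R :=
  sqrt ((2 * INR l + 1) / (4 * PI) * (INR (fact (l - m)) / INR (fact (l + m)))).
Definition Ypos (l m : nat) (p : R3) : Cx :=
  Cscale ((-1) ^ m * Nlm l m / (2 ^ l * INR (fact l)) * dLeg l m (p X3))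
         (Cpow (p X1, p X2) m).
Definition Ylm (l : nat) (m : Z) (p : R3) : Cx :=
  if (0 <=? m)%Z then Ypos l (Z.to_nat m) p
  else Cscale ((-1) ^ Z.to_nat (- m)) (Cconj (Ypos l (Z.to_nat (- m)) p)).

Definition IsWigner (l : nat) (Dw : M3 -> Z -> Z -> Cx) : Prop :=
  forall A : M3, isSO3 A -> forall m : Z, (- Z.of_nat l <= m <= Z.of_nat l)%Z ->
  forall p : R3, unitR3 p ->
    Ylm l m (M3mulv (M3inv A) p)
    = Csum_n (fun i => Cmul (Dw A (Z.of_nat i - Z.of_nat l)%Z m)
                            (Ylm l (Z.of_nat i - Z.of_nat l)%Z p))
             (2 * l + 1).

Definition cosetOf (D : Z) (sigma : M2) : M2 -> Prop :=
  fun tau => exists w, inOD D w /\ tau = M2mul (nmat w) sigma.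
Definition Coset (D : Z) : Type :=
  { S : M2 -> Prop | exists sigma, inGamma D sigma /\ S = cosetOf D sigma }.
Definition rep {D : Z} (S : Coset D) : M2 := epsilon (inhabits M2id) (proj1_sig S).

(* N = [Gamma_infty : Gamma'_infty], Gamma_infty = upper triangular part of Gamma *)
Definition IsIndexInf (D : Z) (N : nat) : Prop :=
  exists reps : list M2, length reps = N /\
    (forall r, In r reps -> inGamma D r /\ mc r = C0) /\
    (forall g, inGamma D g -> mc g = C0 -> exists r, In r reps /\ cosetOf D r g) /\
    (forall i j, (i < N)%nat -> (j < N)%nat ->
       cosetOf D (nth i reps M2id) (nth j reps M2id) -> i = j).

Definition termE (D : Z) (Dw : M3 -> Z -> Z -> Cx) (N : nat) (k m : Z)
    (P : H3) (s : Cx) (S : Coset D) : Cx :=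
  let sigma := rep S in
  let g := M2mul sigma (M2mul (nmat (hz P)) (amat (hl P))) in
  Cscale (/ INR N)
    (Cmul (Cconj (Dw (Phi (M2inv (Tk g))) k m))
          (Cpow_pos (hl (mob sigma P)) (Cadd C1 s))).
Definition termH (D : Z) (Dw : M3 -> Z -> Z -> Cx) (N : nat) (k m : Z)
    (P : H3) (s : Cx) (S : Coset D) : Cx :=
  let sigma := rep S in
  Cscale (/ INR N)
    (Cmul (Cconj (Dw (M3inv (Rdsig sigma P)) k m))
          (Cpow_pos (hl (mob sigma P)) (Cadd C1 s))).

From Stdlib Require Import Reals ZArith Lra Lia Nsatz FunctionalExtensionality ClassicalEpsilon.
From Coquelicot Require Import Coquelicot.
Open Scope R_scope.

(* For sigma = [[a, b], [c, d]] in SL(2, C) and P = z + lambda j put u = c z + d.  Both rotations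
   attached to sigma at P come from the quaternion (u, lambda cbar).  The Iwasawa factor of
   sigma n[z] a[lambda] has bottom row proportional to (c, u / lambda), so
   Phi(T(sigma n[z] a[lambda])^-1) is the rotation rho of that quaternion.  The differential of
   sigma at P is (Im sigma P / lambda) times Z rho^T Z, where Z = diag(-1, -1, 1) is the half-turn
   about the vertical axis, so R(d sigma, P)^-1 = Z rho Z.  As Y^l_k(Z p) = (-1)^k Y^l_k(p) and the
   Y^l_k are linearly independent, D^l_km(Z rho Z) = (-1)^(k+m) D^l_km(rho).  Hence every term of
   H^l_km is e^(-i(k+m) pi) = (-1)^(k+m) times the corresponding term of E^l_km. *)

Lemma Cx_eq (z w : Cx) : fst z = fst w -> snd z = snd w -> z = w.
Proof. destruct z, w; simpl; intros; subst; reflexivity. Qed.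

Lemma Csum_n_ext (f g : nat -> Cx) (n : nat) :
  (forall i, (i < n)%nat -> f i = g i) -> Csum_n f n = Csum_n g n.
Proof.
  induction n as [|n IH]; intro H; simpl; [reflexivity|].
  rewrite IH, H by (try intros; try apply H; lia). reflexivity.
Qed.

Lemma Csum_n_sub (f g : nat -> Cx) (n : nat) :
  Csum_n (fun i => Csub (f i) (g i)) n = Csub (Csum_n f n) (Csum_n g n).
Proof.
  induction n as [|n IH]; simpl; [|rewrite IH];
    apply Cx_eq; unfold Csub, Cadd, Copp, C0; simpl; ring.
Qed.

Lemma Csum_n_mul (z : Cx) (f : nat -> Cx) (n : nat) :
  Csum_n (fun i => Cmul z (f i)) n = Cmul z (Csum_n f n).
Proof.
  induction n as [|n IH]; simpl; [|rewrite IH];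
    apply Cx_eq; unfold Cmul, Cadd, C0; simpl; ring.
Qed.

Lemma Csum_n_C0 (n : nat) : Csum_n (fun _ => C0) n = C0.
Proof.
  induction n as [|n IH]; simpl; [|rewrite IH];
    apply Cx_eq; unfold Cadd, C0; simpl; ring.
Qed.

Lemma Cmul_eq0 (z w : Cx) : Cmul z w = C0 -> w <> C0 -> z = C0.
Proof.
  destruct z as [a b], w as [c d]. unfold Cmul, C0; simpl. intros H Hw.
  injection H as H1 H2.
  assert (Hn : c * c + d * d <> 0).
  { intro Hcd. apply Hw. f_equal; nra. }
  apply Cx_eq; simpl; apply (Rmult_eq_reg_r (c * c + d * d)); auto.
  - transitivity (c * (a * c - b * d) + d * (a * d + b * c)); [ring|rewrite H1, H2; ring].
  - transitivity (c * (a * d + b * c) - d * (a * c - b * d)); [ring|rewrite H1, H2; ring].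
Qed.

Lemma Cexpi_add (x y : R) : Cexpi (x + y) = Cmul (Cexpi x) (Cexpi y).
Proof. unfold Cexpi, Cmul. rewrite cos_plus, sin_plus. apply Cx_eq; simpl; ring. Qed.

Lemma Cexpi_sub_neq0 (x y : R) : 0 < y - x < PI -> Csub (Cexpi x) (Cexpi y) <> C0.
Proof.
  intros Hxy Heq. unfold Csub, Cadd, Copp, Cexpi, C0 in Heq. injection Heq as Hc Hs.
  assert (Hsin : sin (y - x) = 0).
  { unfold Rminus. rewrite sin_plus, sin_neg, cos_neg.
    replace (cos y) with (cos x) by lra. replace (sin y) with (sin x) by lra. ring. }
  assert (0 < sin (y - x)) by (apply sin_gt_0; lra). lra.
Qed.

Lemma Cexpi_relation_shift (n : nat) (b : nat -> Cx) (c th : R) :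
  (forall phi, Csum_n (fun i => Cmul (b i) (Cexpi ((INR i + c) * phi))) (S n) = C0) ->
  forall phi, Csum_n (fun i => Cmul
    (Cmul (b i) (Csub (Cexpi ((INR i + c) * th)) (Cexpi ((INR n + c) * th))))
    (Cexpi ((INR i + c) * phi))) n = C0.
Proof.
  intros H phi.
  set (b' := fun i => Cmul (b i) (Csub (Cexpi ((INR i + c) * th)) (Cexpi ((INR n + c) * th)))).
  change (Csum_n (fun i => Cmul (b' i) (Cexpi ((INR i + c) * phi))) n = C0).
  assert (Hshift : Csum_n (fun i => Cmul (b' i) (Cexpi ((INR i + c) * phi))) (S n) =
    Csub (Csum_n (fun i => Cmul (b i) (Cexpi ((INR i + c) * (phi + th)))) (S n))
         (Cmul (Cexpi ((INR n + c) * th))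
               (Csum_n (fun i => Cmul (b i) (Cexpi ((INR i + c) * phi))) (S n)))).
  { rewrite <- Csum_n_mul, <- Csum_n_sub. apply Csum_n_ext. intros j _. unfold b'.
    replace ((INR j + c) * (phi + th)) with ((INR j + c) * th + (INR j + c) * phi) by ring.
    rewrite Cexpi_add.
    destruct (b j), (Cexpi ((INR j + c) * th)), (Cexpi ((INR n + c) * th)),
      (Cexpi ((INR j + c) * phi)).
    apply Cx_eq; unfold Csub, Cadd, Copp, Cmul; simpl; ring. }
  rewrite !H in Hshift. simpl Csum_n in Hshift. unfold b' at 2 in Hshift.
  destruct (Csum_n (fun i => Cmul (b' i) (Cexpi ((INR i + c) * phi))) n),
    (b n), (Cexpi ((INR n + c) * th)), (Cexpi ((INR n + c) * phi)).
  unfold Csub, Cadd, Copp, Cmul, C0 in Hshift |- *; simpl in Hshift |- *.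
  injection Hshift as E1 E2. apply Cx_eq; simpl; lra.
Qed.

(* Induction on n: shifting phi by PI / (n + 1) removes the top frequency and multiplies every
   lower coefficient by a nonzero factor. *)
Lemma Cexpi_lin_indep (n : nat) : forall (b : nat -> Cx) (c : R),
  (forall phi, Csum_n (fun i => Cmul (b i) (Cexpi ((INR i + c) * phi))) n = C0) ->
  forall i, (i < n)%nat -> b i = C0.
Proof.
  induction n as [|n IH]; intros b c H i Hi; [lia|].
  assert (Hn : 0 < INR n + 1) by (pose proof (pos_INR n); lra).
  set (th := PI / (INR n + 1)).
  assert (Hlow : forall j, (j < n)%nat -> b j = C0).
  { intros j Hj.
    apply (Cmul_eq0 _ _ (IH _ c (Cexpi_relation_shift n b c th H) j Hj)), Cexpi_sub_neq0.
    assert (Hjn : 1 <= INR n - INR j <= INR n).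
    { rewrite <- minus_INR by lia. split; [apply (le_INR 1)|apply le_INR]; lia. }
    replace ((INR n + c) * th - (INR j + c) * th) with (PI * ((INR n - INR j) / (INR n + 1)))
      by (unfold th; field; lra).
    assert (0 < (INR n - INR j) / (INR n + 1) < 1).
    { split; [apply Rdiv_lt_0_compat; lra|].
      apply (Rmult_lt_reg_r (INR n + 1)); [lra|]. unfold Rdiv.
      rewrite Rmult_assoc, Rinv_l by lra. lra. }
    pose proof PI_RGT_0. split; [apply Rmult_lt_0_compat; lra|].
    rewrite <- (Rmult_1_r PI) at 2. apply Rmult_lt_compat_l; lra. }
  destruct (Nat.eq_dec i n) as [->|Hin]; [|apply Hlow; lia].
  specialize (H 0). simpl Csum_n in H.
  rewrite (Csum_n_ext _ (fun _ => C0)) in H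
    by (intros j Hj; rewrite Hlow by lia; apply Cx_eq; unfold Cmul, C0; simpl; ring).
  rewrite Csum_n_C0, Rmult_0_r in H. unfold Cexpi in H. rewrite cos_0, sin_0 in H.
  destruct (b n). unfold Cadd, Cmul, C0 in H |- *; simpl in H.
  injection H as E1 E2. apply Cx_eq; simpl; lra.
Qed.

(** * Linear independence of spherical harmonics *)

Lemma sum_f_R0_single (f : nat -> R) (j0 n : nat) :
  (j0 <= n)%nat -> (forall j, (j <= n)%nat -> j <> j0 -> f j = 0) -> sum_f_R0 f n = f j0.
Proof.
  induction n as [|n IH]; intros Hj0 Hf.
  - replace j0 with 0%nat by lia. reflexivity.
  - simpl. destruct (Nat.eq_dec j0 (S n)) as [->|Hne].
    + rewrite (sum_eq f (fun _ => 0)), sum_cte by (intros; apply Hf; lia). ring.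
    + rewrite IH, (Hf (S n)) by (try intros; try apply Hf; lia). ring.
Qed.

Lemma continuity_pt_sum_f_R0 (F : nat -> R -> R) (x : R) (n : nat) :
  (forall j, continuity_pt (F j) x) -> continuity_pt (fun t => sum_f_R0 (fun j => F j t) n) x.
Proof.
  intro H. induction n as [|n IH]; [apply H|].
  exact (continuity_pt_plus _ (F (S n)) x IH (H (S n))).
Qed.

Lemma nonzero_near_0 (f : R -> R) :
  continuity_pt f 0 -> f 0 <> 0 -> exists t, 0 < t < 1 /\ f t <> 0.
Proof.
  intros Hc Hf0.
  destruct (Hc (Rabs (f 0)) (Rabs_pos_lt _ Hf0)) as [del [Hdel Hnear]].
  set (t := Rmin del 1 / 2).
  assert (Ht : 0 < t < 1 /\ t < del).
  { pose proof (Rmin_l del 1). pose proof (Rmin_r del 1).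
    assert (0 < Rmin del 1) by (apply Rmin_glb_lt; lra). unfold t; lra. }
  exists t. split; [lra|]. intro Hft.
  assert (Hlt : Rabs (f t - f 0) < Rabs (f 0)).
  { apply Hnear. split; [split; [exact I|lra]|].
    simpl; unfold R_dist. rewrite Rminus_0_r, Rabs_right; lra. }
  rewrite Hft, Rminus_0_l, Rabs_Ropp in Hlt. lra.
Qed.

(* The lowest-order monomial of d^{l+m}/dt^{l+m} (t^2-1)^l is t^e0, e0 the parity of l + m. *)
Lemma dLeg_nonzero (l m : nat) : (m <= l)%nat -> exists t, -1 < t < 1 /\ dLeg l m t <> 0.
Proof.
  intro Hml.
  assert (Hpar : exists j0 e0, (e0 = 0 \/ e0 = 1)%nat /\ (2 * j0 = l + m + e0)%nat).
  { destruct (Nat.Even_or_Odd (l + m)) as [[h Hh]|[h Hh]].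
    - exists h, 0%nat. split; [left|]; lia.
    - exists (S h), 1%nat. split; [right|]; lia. }
  destruct Hpar as [j0 [e0 [He0 Hj0]]].
  assert (Hj0l : (j0 <= l)%nat) by (destruct He0; subst; lia).
  set (coef := fun j : nat => INR (fact l) / (INR (fact j) * INR (fact (l - j))) * (-1) ^ (l - j)
                 * (INR (fact (2 * j)) / INR (fact (2 * j - (l + m))))).
  set (h := fun j t => if (l + m <=? 2 * j)%nat then coef j * t ^ (2 * j - (l + m) - e0) else 0).
  assert (Hfactor : forall t, dLeg l m t = t ^ e0 * sum_f_R0 (fun j => h j t) l).
  { intro t. unfold dLeg. rewrite scal_sum. apply sum_eq. intros j _. unfold h.
    destruct (l + m <=? 2 * j)%nat eqn:E; [|ring]. apply Nat.leb_le in E.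
    replace (t ^ (2 * j - (l + m))) with (t ^ e0 * t ^ (2 * j - (l + m) - e0))
      by (rewrite <- pow_add; f_equal; destruct He0; subst; lia).
    unfold coef. ring. }
  assert (Hh0 : sum_f_R0 (fun j => h j 0) l = coef j0).
  { rewrite (sum_f_R0_single _ j0 l Hj0l).
    - unfold h. replace (l + m <=? 2 * j0)%nat with true by (symmetry; apply Nat.leb_le; lia).
      replace (2 * j0 - (l + m) - e0)%nat with 0%nat by lia. simpl. ring.
    - intros j Hj Hne. unfold h. destruct (l + m <=? 2 * j)%nat eqn:E; [|reflexivity].
      apply Nat.leb_le in E. rewrite pow_i by (destruct He0; subst; lia). ring. }
  assert (Hcoef : coef j0 <> 0).
  { pose proof (INR_fact_lt_0 l). pose proof (INR_fact_lt_0 j0).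
    pose proof (INR_fact_lt_0 (l - j0)). pose proof (INR_fact_lt_0 (2 * j0)).
    pose proof (INR_fact_lt_0 (2 * j0 - (l + m))).
    assert ((-1) ^ (l - j0) <> 0) by (apply pow_nonzero; lra).
    assert (0 < INR (fact j0) * INR (fact (l - j0))) by (apply Rmult_lt_0_compat; assumption).
    unfold coef, Rdiv. repeat apply Rmult_integral_contrapositive_currified; try assumption;
      apply Rgt_not_eq; try apply Rinv_0_lt_compat; assumption. }
  assert (Hcont : continuity_pt (fun t => sum_f_R0 (fun j => h j t) l) 0).
  { apply continuity_pt_sum_f_R0. intro j. unfold h. destruct (l + m <=? 2 * j)%nat.
    - apply continuity_pt_scal, derivable_continuous_pt, derivable_pt_pow.
    - apply continuity_pt_const. intros a b; reflexivity. }
  destruct (nonzero_near_0 _ Hcont) as [t [Ht Hsum]]; [rewrite Hh0; exact Hcoef|].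
  exists t. split; [lra|]. rewrite Hfactor.
  apply Rmult_integral_contrapositive_currified; [apply pow_nonzero; lra|exact Hsum].
Qed.

Definition sphere_pt (t phi : R) : R3 := fun i => match i with
  | X1 => sqrt (1 - t ^ 2) * cos phi | X2 => sqrt (1 - t ^ 2) * sin phi | X3 => t end.

Lemma sphere_pt_unit (t phi : R) : -1 < t < 1 -> unitR3 (sphere_pt t phi).
Proof.
  intro Ht. unfold unitR3, sphere_pt.
  assert (Hs : sqrt (1 - t ^ 2) * sqrt (1 - t ^ 2) = 1 - t ^ 2) by (apply sqrt_sqrt; nra).
  pose proof (sin2_cos2 phi) as Hsc. unfold Rsqr in Hsc.
  transitivity ((sqrt (1 - t ^ 2) * sqrt (1 - t ^ 2)) * (sin phi * sin phi + cos phi * cos phi)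
                + t ^ 2); [ring|]. rewrite Hs, Hsc. ring.
Qed.

Lemma Cpow_polar (rho phi : R) (n : nat) :
  Cpow (rho * cos phi, rho * sin phi) n = Cscale (rho ^ n) (Cexpi (INR n * phi)).
Proof.
  induction n as [|n IH]; simpl Cpow.
  - unfold Cexpi. rewrite Rmult_0_l, cos_0, sin_0. apply Cx_eq; unfold Cscale, C1; simpl; ring.
  - rewrite IH, S_INR. unfold Cexpi, Cscale, Cmul.
    replace ((INR n + 1) * phi) with (phi + INR n * phi) by ring.
    rewrite cos_plus, sin_plus. apply Cx_eq; simpl; ring.
Qed.

Definition Ypos_profile (l n : nat) (t : R) : R :=
  (-1) ^ n * Nlm l n / (2 ^ l * INR (fact l)) * dLeg l n t * sqrt (1 - t ^ 2) ^ n.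
Definition Ylm_profile (l : nat) (k : Z) (t : R) : R :=
  if (0 <=? k)%Z then Ypos_profile l (Z.to_nat k) t
  else (-1) ^ Z.to_nat (- k) * Ypos_profile l (Z.to_nat (- k)) t.

Lemma Ylm_sphere_pt (l : nat) (k : Z) (t phi : R) :
  Ylm l k (sphere_pt t phi) = Cscale (Ylm_profile l k t) (Cexpi (IZR k * phi)).
Proof.
  assert (Hpos : forall n, Ypos l n (sphere_pt t phi)
                           = Cscale (Ypos_profile l n t) (Cexpi (INR n * phi))).
  { intro n. unfold Ypos. simpl sphere_pt. rewrite Cpow_polar. unfold Ypos_profile.
    destruct (Cexpi (INR n * phi)). apply Cx_eq; unfold Cscale; simpl; ring. }
  unfold Ylm, Ylm_profile. destruct (0 <=? k)%Z eqn:E.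
  - apply Z.leb_le in E. rewrite Hpos, INR_IZR_INZ, Z2Nat.id by lia. reflexivity.
  - apply Z.leb_gt in E. rewrite Hpos, INR_IZR_INZ, Z2Nat.id by lia.
    replace (IZR k * phi) with (- (IZR (- k) * phi)) by (rewrite opp_IZR; ring).
    unfold Cexpi. rewrite cos_neg, sin_neg. apply Cx_eq; unfold Cscale, Cconj; simpl; ring.
Qed.

Lemma Ypos_profile_nonzero (l n : nat) : (n <= l)%nat ->
  exists t, -1 < t < 1 /\ Ypos_profile l n t <> 0.
Proof.
  intro Hnl. destruct (dLeg_nonzero l n Hnl) as [t [Ht Hd]]. exists t. split; [exact Ht|].
  assert (HN : 0 < Nlm l n).
  { unfold Nlm. apply sqrt_lt_R0. pose proof (INR_fact_lt_0 (l - n)).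
    pose proof (INR_fact_lt_0 (l + n)). pose proof PI_RGT_0. pose proof (pos_INR l).
    apply Rmult_lt_0_compat; apply Rdiv_lt_0_compat; lra. }
  assert (H2l : 0 < 2 ^ l * INR (fact l))
    by (apply Rmult_lt_0_compat; [apply pow_lt; lra|apply INR_fact_lt_0]).
  assert (Hsq : 0 < sqrt (1 - t ^ 2)) by (apply sqrt_lt_R0; nra).
  unfold Ypos_profile, Rdiv.
  repeat apply Rmult_integral_contrapositive_currified; try assumption; try lra;
    try (apply pow_nonzero; lra). apply Rinv_neq_0_compat; lra.
Qed.

Lemma Ylm_profile_nonzero (l : nat) (k : Z) : (- Z.of_nat l <= k <= Z.of_nat l)%Z ->
  exists t, -1 < t < 1 /\ Ylm_profile l k t <> 0.
Proof.
  intro Hk. unfold Ylm_profile. destruct (0 <=? k)%Z eqn:E.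
  - apply Z.leb_le in E. apply Ypos_profile_nonzero. lia.
  - apply Z.leb_gt in E. destruct (Ypos_profile_nonzero l (Z.to_nat (- k))) as [t [Ht Hc]];
      [lia|].
    exists t. split; [exact Ht|].
    apply Rmult_integral_contrapositive_currified; [apply pow_nonzero; lra|exact Hc].
Qed.

(* On the circle of height t the relation becomes a Fourier relation in the azimuth. *)
Lemma Ylm_lin_indep (l : nat) (a : nat -> Cx) :
  (forall p, unitR3 p ->
     Csum_n (fun i => Cmul (a i) (Ylm l (Z.of_nat i - Z.of_nat l) p)) (2 * l + 1) = C0) ->
  forall i, (i < 2 * l + 1)%nat -> a i = C0.
Proof.
  intros H i Hi.
  destruct (Ylm_profile_nonzero l (Z.of_nat i - Z.of_nat l)) as [t [Ht Hprof]]; [lia|].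
  assert (Hfourier : forall phi,
    Csum_n (fun j => Cmul (Cscale (Ylm_profile l (Z.of_nat j - Z.of_nat l) t) (a j))
                         (Cexpi ((INR j + - INR l) * phi))) (2 * l + 1) = C0).
  { intro phi. rewrite <- (H (sphere_pt t phi) (sphere_pt_unit t phi Ht)).
    apply Csum_n_ext. intros j _.
    rewrite Ylm_sphere_pt, minus_IZR, <- !INR_IZR_INZ.
    replace (INR j + - INR l) with (INR j - INR l) by ring.
    destruct (a j), (Cexpi ((INR j - INR l) * phi)).
    apply Cx_eq; unfold Cscale, Cmul; simpl; ring. }
  assert (Hb := Cexpi_lin_indep _ _ _ Hfourier i Hi).
  unfold Cscale, C0 in Hb. injection Hb as Hx Hy.
  apply Rmult_integral in Hx, Hy.
  apply Cx_eq; simpl; [destruct Hx|destruct Hy]; try assumption; exfalso; auto.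
Qed.

(** * Wigner matrices under the half-turn about the vertical axis *)

Definition halfturn_sign (i : i3) : R := match i with X3 => 1 | _ => -1 end.
Definition halfturn (p : R3) : R3 := fun i => halfturn_sign i * p i.
Definition halfturn_conj (A : M3) : M3 := fun i j => halfturn_sign i * halfturn_sign j * A i j.

Lemma M3det_halfturn_conj (A : M3) : M3det (halfturn_conj A) = M3det A.
Proof. unfold M3det, M3cof, halfturn_conj; simpl; ring. Qed.

Lemma M3inv_halfturn_conj (A : M3) : M3inv (halfturn_conj A) = halfturn_conj (M3inv A).
Proof.
  extensionality i; extensionality j. unfold M3inv. rewrite M3det_halfturn_conj.
  unfold halfturn_conj, M3cof, Rdiv; destruct i, j; simpl; ring.
Qed.

Lemma isSO3_halfturn_conj (A : M3) : isSO3 A -> isSO3 (halfturn_conj A).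
Proof.
  intros [Horth Hdet]. split; [|now rewrite M3det_halfturn_conj].
  intros i j. transitivity (halfturn_sign i * halfturn_sign j * M3mul (fun a b => A b a) A i j).
  - destruct i, j; unfold M3mul, halfturn_conj; simpl; ring.
  - rewrite Horth. destruct i, j; unfold delta; simpl; ring.
Qed.

Lemma M3mulv_halfturn_conj (A : M3) (p : R3) :
  M3mulv (halfturn_conj A) p = halfturn (M3mulv A (halfturn p)).
Proof. extensionality i. destruct i; unfold M3mulv, halfturn_conj, halfturn; simpl; ring. Qed.

Lemma unitR3_halfturn (p : R3) : unitR3 p -> unitR3 (halfturn p).
Proof. unfold unitR3, halfturn; simpl; lra. Qed.

Definition neg1_pow (k : Z) : R := cos (IZR k * PI).

Lemma neg1_pow_of_nat (n : nat) : neg1_pow (Z.of_nat n) = (-1) ^ n.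
Proof.
  unfold neg1_pow. rewrite <- INR_IZR_INZ. induction n as [|n IH].
  - simpl. rewrite Rmult_0_l, cos_0. reflexivity.
  - rewrite S_INR, Rmult_plus_distr_r, Rmult_1_l, neg_cos, IH. simpl. ring.
Qed.

Lemma neg1_pow_opp (k : Z) : neg1_pow (- k) = neg1_pow k.
Proof. unfold neg1_pow. rewrite opp_IZR, Ropp_mult_distr_l_reverse, cos_neg. reflexivity. Qed.

Lemma sin_IZR_mul_PI (k : Z) : sin (IZR k * PI) = 0.
Proof. apply sin_eq_0_1. exists k. reflexivity. Qed.

Lemma Cexpi_neg_mul_PI (k m : Z) : Cexpi (- IZR (k + m) * PI) = RtoC (neg1_pow k * neg1_pow m).
Proof.
  unfold Cexpi, neg1_pow, RtoC. rewrite plus_IZR.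
  replace (- (IZR k + IZR m) * PI) with (- (IZR k * PI + IZR m * PI)) by ring.
  rewrite cos_neg, sin_neg, cos_plus, sin_plus, !sin_IZR_mul_PI. apply Cx_eq; simpl; ring.
Qed.

Lemma Ylm_halfturn (l : nat) (k : Z) (p : R3) :
  Ylm l k (halfturn p) = Cscale (neg1_pow k) (Ylm l k p).
Proof.
  assert (Hpos : forall n, Ypos l n (halfturn p) = Cscale ((-1) ^ n) (Ypos l n p)).
  { intro n. unfold Ypos, halfturn. simpl halfturn_sign. rewrite Rmult_1_l.
    replace (Cpow (-1 * p X1, -1 * p X2) n) with (Cscale ((-1) ^ n) (Cpow (p X1, p X2) n)).
    - destruct (Cpow (p X1, p X2) n). apply Cx_eq; unfold Cscale; simpl; ring.
    - induction n as [|n IH]; simpl Cpow; [|rewrite <- IH; destruct (Cpow (p X1, p X2) n)];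
        apply Cx_eq; unfold Cscale, Cmul, C1; simpl; ring. }
  unfold Ylm. destruct (0 <=? k)%Z eqn:E.
  - apply Z.leb_le in E. rewrite Hpos, <- neg1_pow_of_nat, Z2Nat.id by lia. reflexivity.
  - apply Z.leb_gt in E. rewrite Hpos, <- neg1_pow_of_nat, Z2Nat.id, neg1_pow_opp by lia.
    destruct (Ypos l (Z.to_nat (- k)) p). apply Cx_eq; unfold Cscale, Cconj; simpl; ring.
Qed.

(* Ylm_halfturn turns the defining relation of D^l(Z A Z) into (-1)^m times that of D^l(A);
   compare coefficients by Ylm_lin_indep. *)
Lemma Wigner_halfturn_conj (l : nat) (Dw : M3 -> Z -> Z -> Cx) (A : M3) (k m : Z) :
  IsWigner l Dw -> isSO3 A ->
  (- Z.of_nat l <= k <= Z.of_nat l)%Z -> (- Z.of_nat l <= m <= Z.of_nat l)%Z ->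
  Dw (halfturn_conj A) k m = Cscale (neg1_pow k * neg1_pow m) (Dw A k m).
Proof.
  intros HW HA Hk Hm.
  assert (Hrel : forall p, unitR3 p ->
    Csum_n (fun i => Cmul
      (Csub (Dw (halfturn_conj A) (Z.of_nat i - Z.of_nat l)%Z m)
            (Cscale (neg1_pow (Z.of_nat i - Z.of_nat l) * neg1_pow m)
                    (Dw A (Z.of_nat i - Z.of_nat l)%Z m)))
      (Ylm l (Z.of_nat i - Z.of_nat l) p)) (2 * l + 1) = C0).
  { intros p Hp.
    assert (Econj := HW _ (isSO3_halfturn_conj A HA) m Hm p Hp).
    assert (E := HW A HA m Hm (halfturn p) (unitR3_halfturn p Hp)).
    rewrite M3inv_halfturn_conj, M3mulv_halfturn_conj, Ylm_halfturn, E in Econj.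
    transitivity (Csub
      (Csum_n (fun i => Cmul (Dw (halfturn_conj A) (Z.of_nat i - Z.of_nat l)%Z m)
                             (Ylm l (Z.of_nat i - Z.of_nat l) p)) (2 * l + 1))
      (Cmul (RtoC (neg1_pow m))
        (Csum_n (fun i => Cmul (Dw A (Z.of_nat i - Z.of_nat l)%Z m)
                               (Ylm l (Z.of_nat i - Z.of_nat l) (halfturn p))) (2 * l + 1)))).
    - rewrite <- Csum_n_mul, <- Csum_n_sub. apply Csum_n_ext. intros i _. rewrite Ylm_halfturn.
      destruct (Dw (halfturn_conj A) (Z.of_nat i - Z.of_nat l)%Z m),
        (Dw A (Z.of_nat i - Z.of_nat l)%Z m), (Ylm l (Z.of_nat i - Z.of_nat l) p).
      apply Cx_eq; unfold Csub, Cadd, Copp, Cmul, Cscale, RtoC; simpl; ring.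
    - rewrite <- Econj.
      destruct (Csum_n (fun i => Cmul (Dw A (Z.of_nat i - Z.of_nat l)%Z m)
                                      (Ylm l (Z.of_nat i - Z.of_nat l) p)) (2 * l + 1)).
      apply Cx_eq; unfold Csub, Cadd, Copp, Cmul, Cscale, RtoC, C0; simpl; ring. }
  assert (Hi : (Z.to_nat (k + Z.of_nat l) < 2 * l + 1)%nat) by lia.
  assert (Hc := Ylm_lin_indep l _ Hrel _ Hi). cbv beta in Hc.
  replace (Z.of_nat (Z.to_nat (k + Z.of_nat l)) - Z.of_nat l)%Z with k in Hc by lia.
  destruct (Dw (halfturn_conj A) k m), (Dw A k m).
  unfold Csub, Cadd, Copp, Cscale, C0 in Hc |- *; simpl in Hc |- *.
  injection Hc as H1 H2. apply Cx_eq; simpl; lra.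
Qed.

(** * Rotations of quaternions *)

Definition M3tr (A : M3) : M3 := fun i j => A j i.

Lemma M3mul_adjugate (A : M3) (i j : i3) :
  M3mul A (fun i j => M3cof A j i) i j = M3det A * delta i j.
Proof. destruct i, j; unfold M3mul, M3det, M3cof, delta; simpl; ring. Qed.

Lemma M3inv_SO3 (A : M3) : isSO3 A -> M3inv A = M3tr A.
Proof.
  intros [Horth Hdet].
  set (C := fun i j => M3cof A j i).
  assert (HC : forall i j, M3mul A C i j = delta i j).
  { intros i j. unfold C. rewrite M3mul_adjugate, Hdet. ring. }
  extensionality i; extensionality j.
  transitivity (C i j); [unfold M3inv, C; rewrite Hdet; field|].
  transitivity (M3mul (M3mul (M3tr A) A) C i j).
  { unfold M3mul at 1. rewrite !Horth. destruct i; unfold delta; simpl; ring. }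
  transitivity (M3mul (M3tr A) (M3mul A C) i j); [unfold M3mul; ring|].
  unfold M3mul at 1. rewrite !HC. destruct j; unfold M3tr, delta; simpl; ring.
Qed.

Lemma isSO3_scale (X : M3) (N : R) : N <> 0 ->
  (forall i j, M3mul (M3tr X) X i j = N ^ 2 * delta i j) -> M3det X = N ^ 3 ->
  isSO3 (fun i j => X i j / N).
Proof.
  intros HN Horth Hdet. split.
  - intros i j. transitivity (M3mul (M3tr X) X i j / N ^ 2).
    + unfold M3mul, M3tr. field; exact HN.
    + rewrite Horth. field. exact HN.
  - transitivity (M3det X / N ^ 3).
    + unfold M3det, M3cof. field; exact HN.
    + rewrite Hdet. field. exact HN.
Qed.

Definition quat (a b : Cx) : M2 := mkM2 a b (Copp (Cconj b)) (Cconj a).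
Definition qnorm2 (a b : Cx) : R := Cnorm2 a + Cnorm2 b.
(* Phi is quadratic, so this is Phi of the unit quaternion proportional to (a, b). *)
Definition quat_rot (a b : Cx) : M3 := fun i j => Phi (quat a b) i j / qnorm2 a b.

Ltac unfold_Phi_quat :=
  cbv beta iota zeta delta [Phi Xh Xh_inv quat M2mul M2adj delta i3_eqb qnorm2
    Cnorm2 Cadd Cmul Cscale Cconj Copp RtoC ma mb mc md fst snd M3mul M3tr M3cof M3det nx].

Lemma Phi_quat_orth (a b : Cx) (i j : i3) :
  M3mul (M3tr (Phi (quat a b))) (Phi (quat a b)) i j = qnorm2 a b ^ 2 * delta i j.
Proof. destruct a, b, i, j; unfold_Phi_quat; ring. Qed.

Lemma Phi_quat_det (a b : Cx) : M3det (Phi (quat a b)) = qnorm2 a b ^ 3.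
Proof. destruct a, b; unfold_Phi_quat; ring. Qed.

Lemma Phi_quat_transpose (a b : Cx) (i j : i3) :
  Phi (quat (Cconj a) (Copp b)) i j = Phi (quat a b) j i.
Proof. destruct a, b, i, j; unfold_Phi_quat; ring. Qed.

Lemma Phi_quat_scale (x : R) (a b : Cx) (i j : i3) :
  Phi (quat (Cscale x a) (Cscale x b)) i j = x ^ 2 * Phi (quat a b) i j.
Proof. destruct a, b, i, j; unfold_Phi_quat; ring. Qed.

Lemma quat_rot_SO3 (a b : Cx) : qnorm2 a b <> 0 -> isSO3 (quat_rot a b).
Proof. intro H. apply isSO3_scale; [exact H|apply Phi_quat_orth|apply Phi_quat_det]. Qed.

Lemma quat_rot_transpose (a b : Cx) : quat_rot (Cconj a) (Copp b) = M3tr (quat_rot a b).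
Proof.
  extensionality i; extensionality j. unfold quat_rot, M3tr. rewrite Phi_quat_transpose.
  f_equal. destruct a, b; unfold qnorm2, Cnorm2, Cconj, Copp; simpl; ring.
Qed.

Lemma quat_rot_scale (x : R) (a b : Cx) : x <> 0 -> qnorm2 a b <> 0 ->
  quat_rot (Cscale x a) (Cscale x b) = quat_rot a b.
Proof.
  intros Hx HN. extensionality i; extensionality j. unfold quat_rot. rewrite Phi_quat_scale.
  replace (qnorm2 (Cscale x a) (Cscale x b)) with (x ^ 2 * qnorm2 a b)
    by (destruct a, b; unfold qnorm2, Cnorm2, Cscale; simpl; ring).
  field. split; [exact HN|exact Hx].
Qed.

(** * Iwasawa decomposition *)

Lemma M2det_mul (X Y : M2) : M2det (M2mul X Y) = Cmul (M2det X) (M2det Y).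
Proof.
  destruct X as [[] [] [] []], Y as [[] [] [] []].
  apply Cx_eq; cbv beta iota zeta delta [M2det M2mul Csub Cadd Cmul Copp fst snd ma mb mc md];
    ring.
Qed.

Lemma sum_sqr_eq0 (a b c d : R) : a * a + b * b + c * c + d * d = 0 ->
  a = 0 /\ b = 0 /\ c = 0 /\ d = 0.
Proof.
  intro H. pose proof (Rle_0_sqr a). pose proof (Rle_0_sqr b).
  pose proof (Rle_0_sqr c). pose proof (Rle_0_sqr d). unfold Rsqr in *.
  repeat split; apply Rsqr_0_uniq; unfold Rsqr; lra.
Qed.

Lemma SL2_bottom_row_neq0 (g : M2) : M2det g = C1 -> qnorm2 (md g) (Cconj (mc g)) <> 0.
Proof.
  destruct g as [a b [c1 c2] [d1 d2]].
  unfold M2det, qnorm2, C1, Csub, Cadd, Copp, Cmul, Cconj, Cnorm2; simpl. intros Hdet H.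
  injection Hdet as H1 H2.
  destruct (sum_sqr_eq0 d1 d2 c1 c2) as (-> & -> & -> & ->); [nra|]. lra.
Qed.

Lemma M2det_quat (a b : Cx) : M2det (quat a b) = RtoC (qnorm2 a b).
Proof.
  destruct a, b. apply Cx_eq;
    unfold M2det, quat, qnorm2, Cnorm2, RtoC, Csub, Cadd, Copp, Cmul, Cconj; simpl; ring.
Qed.

Lemma M2inv_quat (a b : Cx) : qnorm2 a b = 1 -> M2inv (quat a b) = quat (Cconj a) (Copp b).
Proof.
  intro HN. unfold M2inv. rewrite M2det_quat, HN.
  assert (Hdiv : forall z, Cdiv z (RtoC 1) = z).
  { intros []. apply Cx_eq; unfold Cdiv, Cinv, Cmul, Cnorm2, RtoC; simpl; field. }
  rewrite !Hdiv. unfold quat; simpl. f_equal; destruct b; apply Cx_eq; simpl; ring.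
Qed.

Lemma SU2_quat (K : M2) : inSU2 K -> K = quat (ma K) (mb K) /\ qnorm2 (ma K) (mb K) = 1.
Proof.
  destruct K as [[a1 a2] [b1 b2] [c1 c2] [d1 d2]]. intros [Hdet Hu].
  unfold M2det, C1, Csub, Cadd, Copp, Cmul in Hdet; simpl in Hdet.
  injection Hdet as Hd1 Hd2.
  unfold M2mul, M2adj, M2id, Cadd, Cmul, Cconj, C0, C1 in Hu; simpl in Hu.
  injection Hu as H11 H11' H12 H12' H21 H21' H22 H22'.
  assert (Hrow1 : a1 * a1 + a2 * a2 + b1 * b1 + b2 * b2 = 1) by lra.
  assert (Hrow2 : c1 * c1 + c2 * c2 + d1 * d1 + d2 * d2 = 1) by lra.
  assert (Horth1 : a1 * c1 + a2 * c2 + b1 * d1 + b2 * d2 = 0) by lra.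
  assert (Horth2 : a2 * c1 - a1 * c2 + b2 * d1 - b1 * d2 = 0) by lra.
  assert (Hc1 : c1 = - b1) by nsatz. assert (Hc2 : c2 = b2) by nsatz.
  assert (Hda1 : d1 = a1) by nsatz. assert (Hda2 : d2 = - a2) by nsatz.
  subst. split.
  - unfold quat, Copp, Cconj. simpl. repeat f_equal; ring.
  - unfold qnorm2, Cnorm2. simpl. lra.
Qed.

Lemma quat_rot_unit (a b : Cx) : qnorm2 a b = 1 -> quat_rot a b = Phi (quat a b).
Proof.
  intro HN. extensionality i; extensionality j. unfold quat_rot. rewrite HN. field.
Qed.

Lemma Phi_M2inv_SU2 (K : M2) : inSU2 K -> Phi (M2inv K) = quat_rot (md K) (Cconj (mc K)).
Proof.
  intro HK. destruct (SU2_quat K HK) as [EK HN]. rewrite EK. cbn [md mc quat].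
  rewrite M2inv_quat by exact HN.
  replace (Cconj (Copp (Cconj (mb K)))) with (Copp (mb K))
    by (destruct (mb K); apply Cx_eq; unfold Cconj, Copp; simpl; ring).
  rewrite quat_rot_unit; [reflexivity|].
  rewrite <- HN. destruct (ma K), (mb K). unfold qnorm2, Cnorm2, Cconj, Copp; simpl; ring.
Qed.

Lemma quat_SU2 (a b : Cx) : qnorm2 a b = 1 -> inSU2 (quat a b).
Proof.
  intro HN. split; [unfold inSL2C; rewrite M2det_quat, HN; reflexivity|].
  destruct a as [a1 a2], b as [b1 b2]. unfold qnorm2, Cnorm2 in HN; simpl in HN.
  unfold M2mul, M2adj, M2id, quat; simpl.
  f_equal; apply Cx_eq; unfold Cadd, Cmul, Cconj, Copp, C0, C1; simpl; nra.
Qed.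

(* With r = |c|^2 + |d|^2, the factors are K = r^{-1/2} [[dbar, -cbar], [c, d]], mu = 1 / r and
   w = (a cbar + b dbar) / r. *)
Lemma Iwasawa_exists (g : M2) : M2det g = C1 -> exists K, IsIwasawaK g K.
Proof.
  intro Hdet. pose proof (SL2_bottom_row_neq0 g Hdet) as Hr.
  destruct g as [[a1 a2] [b1 b2] [c1 c2] [d1 d2]].
  unfold qnorm2, Cnorm2, Cconj in Hr; simpl in Hr.
  set (r := d1 * d1 + d2 * d2 + (c1 * c1 + c2 * c2)).
  assert (Hr0 : 0 < r) by (unfold r; nra). clear Hr.
  unfold M2det, C1, Csub, Cadd, Copp, Cmul in Hdet; simpl in Hdet.
  injection Hdet as Hdet1' Hdet2'.
  assert (Hdet1 : a1 * d1 - a2 * d2 - (b1 * c1 - b2 * c2) = 1) by lra.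
  assert (Hdet2 : a1 * d2 + a2 * d1 - (b1 * c2 + b2 * c1) = 0) by lra.
  clear Hdet1' Hdet2'.
  assert (Hsr : sqrt r * sqrt r = r) by (apply sqrt_sqrt; lra).
  assert (Hsr0 : 0 < sqrt r) by (apply sqrt_lt_R0; lra).
  set (sr := sqrt r) in *. set (si := / sr).
  assert (Hsi : si * sr = 1) by (unfold si; field; lra).
  assert (Hsi2 : si * si * r = 1) by (rewrite <- Hsr; unfold si; field; lra).
  exists (quat (si * d1, - (si * d2)) (- (si * c1), si * c2)). split.
  { apply quat_SU2. unfold qnorm2, Cnorm2; simpl.
    transitivity (si * si * r); [unfold r; ring|exact Hsi2]. }
  exists (Cscale (/ r) (Cadd (Cmul (a1, a2) (c1, - c2)) (Cmul (b1, b2) (d1, - d2)))), (/ r).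
  split; [apply Rinv_0_lt_compat; exact Hr0|].
  unfold amat. rewrite sqrt_inv. fold sr. replace (/ / sr) with sr by (field; lra). fold si.
  assert (Hir : / r = si * si) by (apply (Rmult_eq_reg_r r); [rewrite Hsi2; field|]; lra).
  rewrite Hir. clearbody si sr. clear Hir Hsr0.
  unfold M2mul, nmat, quat; f_equal; apply Cx_eq;
    cbv beta iota zeta delta [RtoC Cscale Cconj C0 C1 Cadd Cmul Copp fst snd ma mb mc md].
  all: unfold r in *; nsatz.
Qed.

Lemma Tk_Iwasawa (g : M2) : M2det g = C1 -> IsIwasawaK g (Tk g).
Proof. intro Hdet. unfold Tk. apply epsilon_spec, Iwasawa_exists, Hdet. Qed.

Lemma Iwasawa_bottom_row (g K : M2) : IsIwasawaK g K ->
  exists x, x <> 0 /\ mc K = Cscale x (mc g) /\ md K = Cscale x (md g).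
Proof.
  intros [_ [w [mu [Hmu ->]]]]. exists (sqrt mu).
  assert (Hs : 0 < sqrt mu) by (apply sqrt_lt_R0; exact Hmu).
  split; [lra|]. destruct K as [ka kb [] []].
  split; apply Cx_eq;
    cbv beta iota zeta delta [M2mul nmat amat RtoC Cscale C0 C1 Cadd Cmul fst snd ma mb mc md];
    field; lra.
Qed.

Lemma Phi_M2inv_Tk (g : M2) : M2det g = C1 -> Phi (M2inv (Tk g)) = quat_rot (md g) (Cconj (mc g)).
Proof.
  intro Hdet. pose proof (Tk_Iwasawa g Hdet) as HT.
  destruct (Iwasawa_bottom_row g _ HT) as [x [Hx [Hc Hd]]].
  rewrite (Phi_M2inv_SU2 _ (proj1 HT)), Hc, Hd.
  replace (Cconj (Cscale x (mc g))) with (Cscale x (Cconj (mc g)))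
    by (destruct (mc g); apply Cx_eq; unfold Cconj, Cscale; simpl; ring).
  apply quat_rot_scale; [exact Hx|exact (SL2_bottom_row_neq0 g Hdet)].
Qed.

(** * Differential of the Moebius action *)

(* The quaternion c P + d as the pair (c z + d, lambda cbar); its squared norm is the
   denominator of [mob]. *)
Definition jz (g : M2) (P : H3) : Cx := Cadd (Cmul (mc g) (hz P)) (md g).
Definition jl (g : M2) (P : H3) : Cx := Cscale (hl P) (Cconj (mc g)).

Lemma hl_mob (g : M2) (P : H3) : hl (mob g P) = hl P / qnorm2 (jz g P) (jl g P).
Proof.
  unfold mob, qnorm2, jz, jl; simpl. f_equal.
  destruct (mc g), (Cadd (Cmul (mc g) (hz P)) (md g)). unfold Cnorm2, Cscale, Cconj; simpl; ring.
Qed.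

Lemma qnorm2_jz_jl_pos (g : M2) (P : H3) : M2det g = C1 -> 0 < hl P ->
  0 < qnorm2 (jz g P) (jl g P).
Proof.
  destruct g as [a b [c1 c2] [d1 d2]], P as [[x y] l].
  unfold qnorm2, jz, jl, M2det, C1, Csub, Cadd, Copp, Cmul, Cscale, Cconj, Cnorm2; simpl.
  intros Hdet Hl. injection Hdet as H1 H2.
  set (u1 := c1 * x - c2 * y + d1). set (u2 := c1 * y + c2 * x + d2).
  assert (Hc : 0 <= c1 ^ 2 + c2 ^ 2) by nra.
  assert (Hu : 0 <= u1 ^ 2 + u2 ^ 2) by nra.
  destruct (Req_dec (c1 ^ 2 + c2 ^ 2) 0) as [Hc0|Hc0].
  2:{ assert (0 < l ^ 2 * (c1 ^ 2 + c2 ^ 2)) by (apply Rmult_lt_0_compat; nra). nra. }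
  assert (c1 = 0) by nra. assert (c2 = 0) by nra. subst c1 c2.
  assert (d1 ^ 2 + d2 ^ 2 <> 0)
    by (intro; assert (d1 = 0) by nra; assert (d2 = 0) by nra; subst; lra).
  unfold u1, u2. nra.
Qed.

(* Valid for every g, det g acting on the horizontal components; this lets the derivative be
   computed without using det g = 1. *)
Definition mob_jacobian (g : M2) (P : H3) : M3 :=
  let B := halfturn_conj (quat_rot (Cconj (jz g P)) (Copp (jl g P))) in
  let dt := M2det g in
  fun i j => match i with
    | X1 => fst dt * B X1 j - snd dt * B X2 j
    | X2 => fst dt * B X2 j + snd dt * B X1 j
    | X3 => B X3 j end / qnorm2 (jz g P) (jl g P).

Lemma mob_IsJac (g : M2) (P : H3) : qnorm2 (jz g P) (jl g P) <> 0 ->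
  IsJac (mobR3 g) (toR3 P) (mob_jacobian g P).
Proof.
  destruct g as [[a1 a2] [b1 b2] [c1 c2] [d1 d2]], P as [[x y] l].
  unfold qnorm2, jz, jl.
  cbv beta iota zeta delta [Cnorm2 Cadd Cmul Cscale Cconj hz hl mc md fst snd].
  intros Hd i j. apply is_derive_Reals.
  destruct i, j;
  cbv beta iota zeta delta [mob_jacobian halfturn_conj halfturn_sign quat_rot qnorm2 jz jl M2det
    Csub Phi Xh Xh_inv quat M2mul M2adj mobR3 mob toR3 ofR3 delta i3_eqb Cnorm2 Cadd Cmul Cscale
    Cconj Copp RtoC hz hl ma mb mc md fst snd];
  auto_derive; repeat split; try (intro HH; apply Hd; rewrite <- HH; ring);
  field; intro HH; apply Hd; rewrite <- HH; ring.
Qed.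

Lemma jac_mobR3 (g : M2) (P : H3) : qnorm2 (jz g P) (jl g P) <> 0 ->
  jac (mobR3 g) (toR3 P) = mob_jacobian g P.
Proof.
  intro HN. pose proof (mob_IsJac g P HN) as HJ. unfold jac.
  pose proof (epsilon_spec (inhabits M3zero) _ (ex_intro _ _ HJ)) as Hspec.
  extensionality i; extensionality j. exact (uniqueness_limite _ _ _ _ (Hspec i j) (HJ i j)).
Qed.

Lemma Rdsig_SL2 (g : M2) (P : H3) : M2det g = C1 -> 0 < hl P ->
  Rdsig g P = halfturn_conj (quat_rot (Cconj (jz g P)) (Copp (jl g P))).
Proof.
  intros Hdet Hl. pose proof (qnorm2_jz_jl_pos g P Hdet Hl) as HN.
  extensionality i; extensionality j.
  unfold Rdsig. rewrite hl_mob, jac_mobR3 by lra. unfold mob_jacobian. rewrite Hdet.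
  unfold C1; simpl. destruct i; field; lra.
Qed.

Lemma qnorm2_conj_opp (a b : Cx) : qnorm2 (Cconj a) (Copp b) = qnorm2 a b.
Proof. destruct a, b. unfold qnorm2, Cnorm2, Cconj, Copp; simpl; ring. Qed.

Lemma M3inv_Rdsig_SL2 (g : M2) (P : H3) : M2det g = C1 -> 0 < hl P ->
  M3inv (Rdsig g P) = halfturn_conj (quat_rot (jz g P) (jl g P)).
Proof.
  intros Hdet Hl. pose proof (qnorm2_jz_jl_pos g P Hdet Hl) as HN.
  rewrite (Rdsig_SL2 g P Hdet Hl), M3inv_halfturn_conj, M3inv_SO3, quat_rot_transpose;
    [reflexivity|].
  apply quat_rot_SO3. rewrite qnorm2_conj_opp. lra.
Qed.

Lemma M2det_nmat_amat (w : Cx) (mu : R) : 0 < mu -> M2det (M2mul (nmat w) (amat mu)) = C1.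
Proof.
  intro Hmu. assert (Hs : 0 < sqrt mu) by (apply sqrt_lt_R0; exact Hmu).
  destruct w. apply Cx_eq;
    cbv beta iota zeta delta [M2det M2mul nmat amat Csub Cadd Cmul Copp C1 C0 RtoC fst snd
      ma mb mc md]; field; lra.
Qed.

Lemma Phi_M2inv_Tk_jz_jl (g : M2) (P : H3) : M2det g = C1 -> 0 < hl P ->
  Phi (M2inv (Tk (M2mul g (M2mul (nmat (hz P)) (amat (hl P)))))) = quat_rot (jz g P) (jl g P).
Proof.
  intros Hdet Hl.
  rewrite Phi_M2inv_Tk by (rewrite M2det_mul, Hdet, M2det_nmat_amat by exact Hl;
                           apply Cx_eq; unfold Cmul, C1; simpl; ring).
  pose proof (qnorm2_jz_jl_pos g P Hdet Hl) as HN.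
  destruct P as [[x y] l]. unfold jz, jl in *. cbn [hz hl] in *.
  assert (Hsq : sqrt l * sqrt l = l) by (apply sqrt_sqrt; lra).
  assert (Hs : 0 < sqrt l) by (apply sqrt_lt_R0; exact Hl).
  set (s := sqrt l) in *. clearbody s. subst l.
  symmetry. rewrite <- (quat_rot_scale (/ s)) by (try apply Rinv_neq_0_compat; lra).
  destruct g as [a b [c1 c2] [d1 d2]]. f_equal; apply Cx_eq;
    cbv beta iota zeta delta [M2mul nmat amat Cscale Cconj Cadd Cmul C0 C1 RtoC fst snd
      ma mb mc md]; rewrite ?sqrt_square by lra; field; lra.
Qed.

(** * The Eisenstein series *)

Lemma M2det_nmat (w : Cx) : M2det (nmat w) = C1.
Proof. apply Cx_eq; unfold M2det, nmat, Csub, Cadd, Copp, Cmul, C0, C1; simpl; ring. Qed.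

Lemma rep_SL2 (D : Z) (S : Coset D) : M2det (rep S) = C1.
Proof.
  destruct S as [S HS]. unfold rep; simpl. destruct HS as [s0 [[Hs0 _] ->]].
  assert (Hin : cosetOf D s0 s0).
  { exists C0. split.
    - exists 0%Z, 0%Z. apply Cx_eq; unfold Cadd, RtoC, Cscale, C0; simpl; ring.
    - destruct s0 as [[] [] [] []]. unfold M2mul, nmat, C0, C1, Cadd, Cmul; simpl.
      f_equal; apply Cx_eq; simpl; ring. }
  destruct (epsilon_spec (inhabits M2id) (cosetOf D s0) (ex_intro _ s0 Hin)) as [w [_ ->]].
  rewrite M2det_mul, M2det_nmat, Hs0. apply Cx_eq; unfold Cmul, C1; simpl; ring.
Qed.

Lemma Cnorm_mul (z w : Cx) : Cnorm (Cmul z w) = Cnorm z * Cnorm w.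
Proof.
  unfold Cnorm. rewrite <- sqrt_mult_alt by (unfold Cnorm2; nra). f_equal.
  destruct z, w. unfold Cnorm2, Cmul; simpl; ring.
Qed.

Lemma Csum_list_map_mul (c : Cx) (l : list Cx) :
  Csum_list (map (Cmul c) l) = Cmul c (Csum_list l).
Proof.
  induction l as [|z l IH]; simpl; [|rewrite IH; destruct z, (Csum_list l)];
    destruct c; apply Cx_eq; unfold Cmul, Cadd, C0; simpl; ring.
Qed.

Lemma HasSum_mul {I : Type} (c : Cx) (f : I -> Cx) (S : Cx) :
  HasSum f S -> HasSum (fun i => Cmul c (f i)) (Cmul c S).
Proof.
  intros Hf eps Heps. pose proof (sqrt_pos (Cnorm2 c)) as Hc. fold (Cnorm c) in Hc.
  destruct (Hf (eps / (Cnorm c + 1))) as [F0 HF0]; [apply Rdiv_lt_0_compat; lra|].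
  exists F0. intros F Hnd Hincl. specialize (HF0 F Hnd Hincl).
  replace (Csub (Csum_list (map (fun i => Cmul c (f i)) F)) (Cmul c S))
    with (Cmul c (Csub (Csum_list (map f F)) S)).
  2:{ rewrite <- (map_map f (Cmul c)), Csum_list_map_mul.
      destruct c, (Csum_list (map f F)), S.
      apply Cx_eq; unfold Csub, Cadd, Copp, Cmul; simpl; ring. }
  rewrite Cnorm_mul.
  set (x := Cnorm (Csub (Csum_list (map f F)) S)) in *.
  assert (Hx : 0 <= x) by apply sqrt_pos.
  assert (Hlt : (Cnorm c + 1) * x < eps).
  { apply (Rmult_lt_compat_l (Cnorm c + 1)) in HF0; [|lra].
    replace ((Cnorm c + 1) * (eps / (Cnorm c + 1))) with eps in HF0 by (field; lra). exact HF0. }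
  nra.
Qed.

Lemma termH_termE (D : Z) (l : nat) (k m : Z) (s : Cx) (P : H3)
    (Dw : M3 -> Z -> Z -> Cx) (N : nat) (S : Coset D) :
  (- Z.of_nat l <= k <= Z.of_nat l)%Z -> (- Z.of_nat l <= m <= Z.of_nat l)%Z ->
  0 < hl P -> IsWigner l Dw ->
  termH D Dw N k m P s S = Cmul (Cexpi (- IZR (k + m) * PI)) (termE D Dw N k m P s S).
Proof.
  intros Hk Hm Hl HW. pose proof (rep_SL2 D S) as Hdet.
  pose proof (qnorm2_jz_jl_pos _ P Hdet Hl) as HN.
  unfold termH, termE.
  rewrite (M3inv_Rdsig_SL2 _ P Hdet Hl), (Phi_M2inv_Tk_jz_jl _ P Hdet Hl),
    (Wigner_halfturn_conj l Dw) by (try apply quat_rot_SO3; auto; lra).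
  rewrite Cexpi_neg_mul_PI.
  destruct (Dw _ k m), (Cpow_pos (hl (mob (rep S) P)) (Cadd C1 s)).
  apply Cx_eq; unfold Cscale, Cmul, Cconj, RtoC; simpl; ring.
Qed.

Theorem mainTheorem8 (D : Z) (l : nat) (k m : Z) (s : Cx) (P : H3)
    (Dw : M3 -> Z -> Z -> Cx) (N : nat) (Ev : Cx) :
  (0 < D)%Z -> squarefree D ->
  (- Z.of_nat l <= k <= Z.of_nat l)%Z -> (- Z.of_nat l <= m <= Z.of_nat l)%Z ->
  1 < fst s -> 0 < hl P ->
  IsWigner l Dw -> IsIndexInf D N ->
  HasSum (termE D Dw N k m P s) Ev ->
  HasSum (termH D Dw N k m P s) (Cmul (Cexpi (- IZR (k + m) * PI)) Ev).
Proof.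
  (* The identity holds term by term. *)
  intros _ _ Hk Hm _ Hl HW _ HE.
  replace (termH D Dw N k m P s)
    with (fun S => Cmul (Cexpi (- IZR (k + m) * PI)) (termE D Dw N k m P s S))
    by (extensionality S; symmetry; apply (termH_termE D l); assumption).
  exact (HasSum_mul _ _ _ HE).
Qed.
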